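(* Let $\varepsilon>0$, $w>0$, $\delta>0$, and run $\textsc{ApproxGeneral}(\varepsilon,\delta,w)$ with any $(1+w)$-approximate oracle. Then for every $i=1,\dots,\tau$, $$\alpha^L(i)\le\delta L\,e^{\varepsilon(1+w)f_i/\beta}.$$
   Context: Let $G=(V,E)$ be a finite directed graph with capacities $c:E\to\mathbb{R}_{>0}$, edge lengths $\ell:E\to\mathbb{Z}_{\ge1}$, distinct vertices $s,t$, and a positive integer $L$. Let $\mathcal{P}_L$ be the set of directed simple $s$-$t$ paths $P$ with $\ell(P)=\sum_{e\in P}\ell(e)\le L$, and assume $\mathcal{P}_L\ne\emptyset$. For $y:E\to\mathbb{R}_{\ge0}$ let $y(P)=\sum_{e\in P}y(e)$ and $d^L_y(s,t)=\min_{P\in\mathcal{P}_L}y(P)$. Let $\beta$ be the optimum of the LP $\min\{\sum_e c(e)y(e): y\ge0,\ y(P)\ge1\ \forall P\in\mathcal{P}_L\}$. A $(1+w)$-approximate oracle ($w>0$) is a map $\mathcal{O}$ assigning to each $y:E\to\mathbb{R}_{\ge0}$ a path $\mathcal{O}(y)\in\mathcal{P}_L$ with $y(\mathcal{O}(y))\le(1+w)\,d^L_y(s,t)$. Algorithm $\textsc{ApproxGeneral}(\varepsilon,\delta,w)$: - Initialize $i=0$, $y_0\equiv\delta$, and $x_0\equiv0$. Let $\alpha^L(i)=d^L_{y_i}(s,t)$ and $\bar\alpha^L(i)=y_i(\mathcal{O}(y_i))$. - While $\bar\alpha^L(i)<1+w$: - set $i\leftarrow i+1$; - let $P_i=\mathcal{O}(y_{i-1})$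 and $c_i=\min_{e\in P_i}c(e)$; - set $x_i=x_{i-1}$ except $x_i(P_i)=x_{i-1}(P_i)+c_i$; - set $y_i(e)=y_{i-1}(e)(1+\varepsilon c_i/c(e))$ for $e\in P_i$, and $y_i(e)=y_{i-1}(e)$ otherwise. - Return $x_i$. $\tau$ is the number of iterations, and $f_i=\sum_Px_i(P)$. *)

From mathcomp Require Import all_boot.
From Stdlib Require Import Reals.
Set Implicit Arguments.
Unset Strict Implicit.
Unset Printing Implicit Defensive.

Definition rsum {T : Type} (s : seq T) (f : T -> R) : R :=
  foldr (fun x a => (f x + a)%R) 0%R s.

Section Graph.
Variables (V E : finType) (tl hd : E -> V).

(* P = [e1;...;ek] is a directed simple s-t path: tail e1 = s, head e_j = tail e_{j+1},
   head ek = t, and the vertex sequence s, head e1, ..., head ek has no repetition. *)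
Definition is_st_path (s t : V) (P : seq E) : bool :=
  [&& map tl P == belast s (map hd P), last s (map hd P) == t & uniq (s :: map hd P)].

Definition in_PL (ell : E -> nat) (s t : V) (L : nat) (P : seq E) : bool :=
  is_st_path s t P && (sumn (map ell P) <= L)%N.

Variables (ell : E -> nat) (s t : V) (L : nat).

Definition ylen (y : E -> R) (P : seq E) : R := rsum P y.

Definition is_dL (y : E -> R) (a : R) : Prop :=
  (exists P, in_PL ell s t L P /\ ylen y P = a) /\
  (forall P, in_PL ell s t L P -> (a <= ylen y P)%R).

Definition LP_feasible (y : E -> R) : Prop :=
  (forall e, (0 <= y e)%R) /\ (forall P, in_PL ell s t L P -> (1 <= ylen y P)%R).

Definition LP_cost (c : E -> R) (y : E -> R) : R := rsum (enum E) (fun e => (c e * y e)%R).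

Definition is_LP_opt (c : E -> R) (beta : R) : Prop :=
  (exists y, LP_feasible y /\ LP_cost c y = beta) /\
  (forall y, LP_feasible y -> (beta <= LP_cost c y)%R).

Definition approx_oracle (w : R) (O : (E -> R) -> seq E) : Prop :=
  forall y : E -> R, (forall e, (0 <= y e)%R) ->
    in_PL ell s t L (O y) /\
    (forall a, is_dL y a -> (ylen y (O y) <= (1 + w) * a)%R).

Definition path_cap (c : E -> R) (P : seq E) : R :=
  match P with
  | [::] => 0%R
  | e :: P' => foldr (fun e' m => Rmin (c e') m) (c e) P'
  end.

Variables (O : (E -> R) -> seq E) (c : E -> R) (eps delta : R).

(* y_i of ApproxGeneral (the sequence defined irrespective of the stopping test) *)
Fixpoint yseq (i : nat) : E -> R :=
  match i with
  | 0 => fun _ => delta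
  | i'.+1 =>
      let y := yseq i' in
      let P := O y in
      fun e => if e \in P then (y e * (1 + eps * path_cap c P / c e))%R else y e
  end.

Definition chosen (j : nat) : seq E := O (yseq j.-1).

Definition xflow (i : nat) (P : seq E) : R :=
  rsum (iota 1 i) (fun j => if chosen j == P then path_cap c (chosen j) else 0%R).

(* f_i = sum_P x_i(P); x_i vanishes outside {P_1,...,P_i} *)
Definition fval (i : nat) : R := rsum (undup (map chosen (iota 1 i))) (xflow i).

Definition alphabar (i : nat) : R := ylen (yseq i) (O (yseq i)).

End Graph.

(* Write D(n) = sum_e c(e) y_n(e)
   for the LP cost of the current lengths and
       Phi(n) = delta L + (D(n) - D(0)) / beta.
   1. LP duality (LP_lower_bound, dist_le_cost): the excess y_n - delta, rescaled by its
      shortest P_L-length, is feasible for the LP; since a path in P_L has at most L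
      edges, alpha^L(n) <= Phi(n).
   2. One iteration raises D by exactly eps c_{n+1} y_n(P_{n+1}) (cost_step), and the
      oracle gives y_n(P_{n+1}) <= (1+w) alpha^L(n) <= (1+w) Phi(n); with 1 + x <= e^x
      this yields Phi(n+1) <= Phi(n) exp(eps (1+w) c_{n+1} / beta) (potential_step).
   3. Iterating from Phi(0) = delta L gives Phi(n) <= delta L exp(eps (1+w) F(n) / beta),
      where F(n) = c_1 + ... + c_n is the flow value f_n (fval_pushed).  The
   bound holds at every iteration. *)

From HB Require Import structures.
From Pilot Require Import Defs.
From mathcomp Require Import all_boot.
From Stdlib Require Import Reals Lra.

Open Scope R_scope.

(* Real addition and multiplication as monoid laws, so that MathComp's big operators and
   their lemmas (splitting, distributivity, reindexing, exchange) apply to real sums. *)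
Lemma RplusA : associative Rplus. Proof. by move=> x y z; rewrite Rplus_assoc. Qed.

HB.instance Definition _ := Monoid.isComLaw.Build R 0 Rplus RplusA Rplus_comm Rplus_0_l.
HB.instance Definition _ := Monoid.isMulLaw.Build R 0 Rmult Rmult_0_l Rmult_0_r.
HB.instance Definition _ :=
  Monoid.isAddLaw.Build R Rmult Rplus Rmult_plus_distr_r Rmult_plus_distr_l.

Local Notation "\sum_ ( i <- r ) F" := (\big[Rplus/0%R]_(i <- r) F%R) : R_scope.

Lemma rsumE (T : Type) (r : seq T) (F : T -> R) : rsum r F = \sum_(x <- r) F x.
Proof. by rewrite unlock. Qed.

Lemma sumr_ge0 (T : Type) (r : seq T) (F : T -> R) :
  (forall x, 0 <= F x) -> 0 <= \sum_(x <- r) F x.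
Proof. by move=> F0; apply: big_ind => //; [lra | move=> *; lra]. Qed.

Lemma sumr_const (T : Type) (r : seq T) (k : R) : \sum_(x <- r) k = k * INR (size r).
Proof.
elim: r => [|x r IH]; first by rewrite big_nil /=; lra.
by rewrite big_cons IH (_ : size (x :: r) = (size r).+1) // S_INR; lra.
Qed.

Lemma sum_pick (T : eqType) (r : seq T) (x : T) (g : R) : uniq r -> x \in r ->
  \sum_(y <- r) (if x == y then g else 0) = g.
Proof.
move=> ur xr; rewrite -big_mkcond -big_filter.
rewrite (@eq_in_filter _ _ (pred1 x)); last by move=> y _; rewrite /= eq_sym.
by rewrite filter_pred1_uniq // big_seq1.
Qed.

Lemma sum_enum_restrict {T : finType} {P : seq T} {g : T -> R} : uniq P ->
  \sum_(x <- enum T) (if x \in P then g x else 0) = \sum_(x <- P) g x.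
Proof.
move=> uP; rewrite -big_mkcond -big_filter; apply: perm_big.
apply: uniq_perm => //; first exact/filter_uniq/enum_uniq.
by move=> x; rewrite mem_filter mem_enum andbT.
Qed.

Lemma exists_argmin {T : eqType} (f : T -> R) (x0 : T) (r : seq T) :
  exists2 m, m \in x0 :: r & forall z, z \in x0 :: r -> f m <= f z.
Proof.
elim: r => [|x r [m mr mmin]].
  by exists x0 => [|z]; rewrite ?mem_seq1 // => /eqP ->; lra.
have mmin' z : z \in x0 :: x :: r -> z = x \/ f m <= f z.
  rewrite !inE => /or3P [zx0 | /eqP-> | zr]; [right | by left | right];
    by apply: mmin; rewrite inE ?zx0 ?zr ?orbT.
have [fxm | fmx] := Rle_lt_dec (f x) (f m).
  by exists x => [|z /mmin' [-> |]]; rewrite ?inE ?eqxx ?orbT //; lra.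
exists m => [|z /mmin' [-> |]] //; last lra.
by move: mr; rewrite !inE => /orP [->|->]; rewrite ?orbT.
Qed.

Fixpoint bounded_seqs (T : finType) (n : nat) : seq (seq T) :=
  if n is n'.+1 then [::] :: [seq x :: p | x <- enum T, p <- bounded_seqs T n']
  else [:: [::]].

Lemma mem_bounded_seqs (T : finType) (n : nat) (p : seq T) :
  (size p <= n)%nat -> p \in bounded_seqs T n.
Proof.
elim: n p => [|n IH] [|x p] //= sp; rewrite inE ?eqxx //; apply/orP; right.
by apply: (allpairs_f (fun x p => x :: p)); [rewrite mem_enum | exact: IH].
Qed.

Section Paths.
Variables (V E : finType) (tl hd : E -> V) (ell : E -> nat) (s t : V) (L : nat).
Hypothesis ell_pos : forall e, (1 <= ell e)%nat.
Hypothesis PL_nonempty : exists P, in_PL tl hd ell s t L P.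

Local Notation in_PL := (in_PL tl hd ell s t L).

(* Every edge has length at least 1, so a path of length at most L has at most L edges. *)
Lemma in_PL_size (P : seq E) : in_PL P -> (size P <= L)%nat.
Proof.
case/andP=> _; apply: leq_trans; elim: P => //= e P IH.
by rewrite -add1n leq_add.
Qed.

(* A simple path never repeats an edge, since it never repeats its head vertex. *)
Lemma in_PL_uniq (P : seq E) : in_PL P -> uniq P.
Proof. by case/andP=> /and3P [_ _ /= /andP [_ /map_uniq]]. Qed.

(* P_L is finite and nonempty, so every objective is minimised on it. *)
Lemma exists_min_path (f : seq E -> R) :
  exists2 P, in_PL P & forall Q, in_PL Q -> f P <= f Q.
Proof.
have [P0 P0L] := PL_nonempty.
have [P] := exists_argmin f P0 (filter in_PL (bounded_seqs E L)).
have cand Q : in_PL Q -> Q \in P0 :: filter in_PL (bounded_seqs E L).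
  by move=> QL; rewrite inE mem_filter QL mem_bounded_seqs ?orbT ?in_PL_size.
rewrite inE mem_filter => /orP [/eqP-> | /andP [PL _]] Pmin.
  by exists P0 => // Q /cand /Pmin.
by exists P => // Q /cand /Pmin.
Qed.

Lemma dist_exists (y : E -> R) : exists a, is_dL tl hd ell s t L y a.
Proof.
have [P PL Pmin] := exists_min_path (ylen y).
by exists (ylen y P); split; [exists P | exact: Pmin].
Qed.

Lemma ylen_scale (k : R) (y : E -> R) (P : seq E) :
  ylen (fun e => k * y e) P = k * ylen y P.
Proof. by rewrite /ylen !rsumE big_distrr. Qed.

Section LPBound.
Variables (c : E -> R) (beta : R).
Hypothesis c_pos : forall e, 0 < c e.
Hypothesis beta_opt : is_LP_opt tl hd ell s t L c beta.

Lemma LP_cost_scale (k : R) (y : E -> R) :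
  LP_cost c (fun e => k * y e) = k * LP_cost c y.
Proof.
rewrite /LP_cost !rsumE big_distrr; apply: eq_bigr => e _ /=; ring.
Qed.

Lemma LP_cost_ge0 (y : E -> R) : (forall e, 0 <= y e) -> 0 <= LP_cost c y.
Proof.
move=> y0; rewrite /LP_cost rsumE; apply: sumr_ge0 => e.
by apply: Rmult_le_pos; [apply: Rlt_le | apply: y0].
Qed.

(* The LP optimum is positive: a feasible point must put weight on the edges of some path. *)
Lemma LP_opt_pos : 0 < beta.
Proof.
have [[yb [[yb0 yb1] <-]] _] := beta_opt; have [P0 P0L] := PL_nonempty.
have term_le e : c e * yb e <= LP_cost c yb.
  rewrite /LP_cost rsumE (big_rem e) ?mem_enum //= -[X in X <= _]Rplus_0_r.
  apply: Rplus_le_compat_l; apply: sumr_ge0 => e'.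
  by apply: Rmult_le_pos; [apply: Rlt_le | apply: yb0].
have [//|cost_le0] := Rlt_le_dec 0 (LP_cost c yb).
have yb_eq0 e : yb e = 0.
  have := term_le e; have := c_pos e; have := yb0 e; nra.
have := yb1 P0 P0L; rewrite /ylen rsumE (eq_bigr (fun=> 0)) => [|e _]; last exact: yb_eq0.
by rewrite sumr_const; lra.
Qed.

(* LP duality in its simplest form: if every path in P_L has z-length at least m,
   then z/m is feasible, so beta * m is at most the cost of z. *)
Lemma LP_lower_bound {z : E -> R} {m : R} :
  (forall e, 0 <= z e) -> 0 <= m -> (forall P, in_PL P -> m <= ylen z P) ->
  beta * m <= LP_cost c z.
Proof.
move=> z0 m0 zm; have [m_pos | <-] := Rle_lt_or_eq_dec _ _ m0; last first.
  by rewrite Rmult_0_r; apply: LP_cost_ge0.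
have im_pos : 0 < / m by apply: Rinv_0_lt_compat.
have feasible : LP_feasible tl hd ell s t L (fun e => / m * z e).
  split=> [e | P PL]; first by have := z0 e; nra.
  rewrite ylen_scale -(Rinv_l m); last lra.
  by apply: Rmult_le_compat_l; [lra | apply: zm].
have := proj2 beta_opt _ feasible; rewrite LP_cost_scale => le_beta.
have := Rmult_le_compat_r m _ _ m0 le_beta.
by rewrite (_ : / m * LP_cost c z * m = LP_cost c z) //; field; lra.
Qed.

(* If y >= delta everywhere, the y-distance exceeds delta * L by at most (cost of the excess
   y - delta) / beta: the excess is a scaled LP solution, while a path has at most L edges. *)
Lemma dist_le_cost (delta : R) (y : E -> R) (a : R) :
  0 <= delta -> (forall e, delta <= y e) -> is_dL tl hd ell s t L y a ->
  a <= delta * INR L + (LP_cost c y - LP_cost c (fun _ => delta)) / beta.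
Proof.
move=> delta0 y_ge [_ a_min]; pose z e := y e - delta.
have z0 e : 0 <= z e by have := y_ge e; rewrite /z; lra.
have [Pz PzL Pzmin] := exists_min_path (ylen z).
have m0 : 0 <= ylen z Pz by rewrite /ylen rsumE; apply: sumr_ge0.
have dual := LP_lower_bound z0 m0 Pzmin.
have excess_cost : LP_cost c y - LP_cost c (fun _ => delta) = LP_cost c z.
  suff -> : LP_cost c y = LP_cost c z + LP_cost c (fun _ => delta) by ring.
  by rewrite /LP_cost !rsumE -big_split; apply: eq_bigr => e _ /=; rewrite /z; ring.
have len_split : ylen y Pz = ylen z Pz + delta * INR (size Pz).
  rewrite /ylen !rsumE -sumr_const -big_split.
  by apply: eq_bigr => e _ /=; rewrite /z; ring.
have size_le : delta * INR (size Pz) <= delta * INR L.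
  by apply/Rmult_le_compat_l/le_INR/leP/in_PL_size.
have beta_pos := LP_opt_pos.
have m_le : ylen z Pz <= LP_cost c z / beta.
  apply: (Rmult_le_reg_l beta) => //.
  by rewrite (_ : beta * (LP_cost c z / beta) = LP_cost c z) //; field; lra.
rewrite excess_cost; have := a_min Pz PzL; lra.
Qed.

Lemma path_cap_ge0 (P : seq E) : 0 <= path_cap c P.
Proof.
case: P => [|e P] /=; first lra.
by apply: Rlt_le; elim: P => [|e' P IH] //=; apply: Rmin_pos.
Qed.

Section Algorithm.
Variables (O : (E -> R) -> seq E) (eps w delta : R).
Hypothesis eps_ge0 : 0 <= eps.
Hypothesis w_ge0 : 0 <= w.
Hypothesis delta_ge0 : 0 <= delta.
Hypothesis oracle : approx_oracle tl hd ell s t L w O.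

Local Notation y := (yseq O c eps delta).
Local Notation chosen := (chosen O c eps delta).
Local Notation cap j := (path_cap c (chosen j)).

(* The lengths only ever grow, starting from delta. *)
Lemma yseq_ge_delta (n : nat) (e : E) : delta <= y n e.
Proof.
elim: n => [|n IH] /=; first lra.
case: ifP => // _; have := IH.
have : 0 <= eps * path_cap c (O (y n)) / c e.
  apply: Rmult_le_pos; first exact: Rmult_le_pos (path_cap_ge0 _).
  exact/Rlt_le/Rinv_0_lt_compat.
by nra.
Qed.

(* In particular every y_n is a legitimate input for the oracle. *)
Lemma yseq_ge0 (n : nat) (e : E) : 0 <= y n e.
Proof. by have := yseq_ge_delta n e; lra. Qed.

Lemma cost_step (n : nat) :
  LP_cost c (y n.+1) = LP_cost c (y n) + eps * cap n.+1 * ylen (y n) (chosen n.+1).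
Proof.
have Puniq : uniq (chosen n.+1) by apply: in_PL_uniq; case: (oracle (y n) (yseq_ge0 n)).
rewrite /ylen /LP_cost !rsumE -(sum_enum_restrict Puniq) big_distrr -big_split.
apply: eq_bigr => e _ /=; case: ifP => _ /=; last ring.
by rewrite /Defs.chosen /=; field; have := c_pos e; lra.
Qed.

Definition potential (n : nat) : R :=
  delta * INR L + (LP_cost c (y n) - LP_cost c (y 0)) / beta.

Lemma dist_le_potential {n : nat} {a : R} :
  is_dL tl hd ell s t L (y n) a -> a <= potential n.
Proof. exact/dist_le_cost/yseq_ge_delta. Qed.

(* One iteration multiplies the potential by at most exp(eps (1+w) c_{n+1} / beta):
   the cost grows by eps c_{n+1} y_n(P_{n+1}) <= eps c_{n+1} (1+w) alpha^L(n), and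
   alpha^L(n) is itself bounded by the potential. *)
Lemma potential_step (n : nat) :
  potential n.+1 <= potential n * exp (eps * (1 + w) * cap n.+1 / beta).
Proof.
have beta_pos := LP_opt_pos.
have [a a_dist] := dist_exists (y n).
have a_ge0 : 0 <= a.
  by case: a_dist => [[P [_ <-]] _]; rewrite /ylen rsumE; apply/sumr_ge0/yseq_ge0.
have a_le := dist_le_potential a_dist.
have oracle_le := proj2 (oracle (y n) (yseq_ge0 n)) _ a_dist.
have cap_ge0 := path_cap_ge0 (chosen n.+1).
set K := eps * (1 + w) * cap n.+1 / beta.
have growth : potential n.+1 <= potential n * (1 + K).
  have -> : potential n.+1 = potential n + eps * cap n.+1 * ylen (y n) (chosen n.+1) / beta.
    by rewrite /potential cost_step; field; lra.
  have -> : potential n * (1 + K) = potential n + eps * cap n.+1 * ((1 + w) * potential n) / beta.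
    by rewrite /K; field; lra.
  apply/Rplus_le_compat_l/Rmult_le_compat_r; first exact/Rlt_le/Rinv_0_lt_compat.
  apply: Rmult_le_compat_l; first exact: Rmult_le_pos.
  apply: Rle_trans oracle_le _; apply: Rmult_le_compat_l; lra.
apply: Rle_trans growth _; apply: Rmult_le_compat_l; first lra.
exact: exp_ineq1_le.
Qed.

Definition pushed (n : nat) : R := \sum_(j <- iota 1 n) cap j.

Lemma pushedS (n : nat) : pushed n.+1 = pushed n + cap n.+1.
Proof. by rewrite /pushed -[n.+1]addn1 iotaD big_cat /= big_seq1 add1n addn1. Qed.

(* The flow value f_i is the total amount pushed: each iteration j adds c_j to x(P_j). *)
Lemma fval_pushed (n : nat) : fval O c eps delta n = pushed n.
Proof.
rewrite /fval /xflow rsumE; under eq_bigr do rewrite rsumE.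
rewrite exchange_big; apply: eq_big_seq => j j_in /=.
by rewrite sum_pick ?undup_uniq // mem_undup map_f.
Qed.

Lemma potential_bound (n : nat) :
  potential n <= delta * INR L * exp (eps * (1 + w) * pushed n / beta).
Proof.
have beta_pos := LP_opt_pos.
elim: n => [|n IH].
  rewrite /potential /pushed big_nil (_ : eps * (1 + w) * 0 / beta = 0); last by field; lra.
  by rewrite exp_0; apply: Req_le; field; lra.
apply: Rle_trans (potential_step n) _.
have -> : eps * (1 + w) * pushed n.+1 / beta
          = eps * (1 + w) * pushed n / beta + eps * (1 + w) * cap n.+1 / beta.
  by rewrite pushedS; field; lra.
rewrite exp_plus -Rmult_assoc; apply: Rmult_le_compat_r => //; exact/Rlt_le/exp_pos.
Qed.

Lemma dist_bound (n : nat) (a : R) :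
  is_dL tl hd ell s t L (y n) a ->
  a <= delta * INR L * exp (eps * (1 + w) * fval O c eps delta n / beta).
Proof.
move=> a_dist; rewrite fval_pushed.
exact: Rle_trans (dist_le_potential a_dist) (potential_bound n).
Qed.

End Algorithm.
End LPBound.
End Paths.

Close Scope R_scope.

Theorem mainTheorem8
  (V E : finType) (tl hd : E -> V)
  (Hsimple : injective (fun e => (tl e, hd e)))
  (c : E -> R) (Hc : forall e, (0 < c e)%R)
  (ell : E -> nat) (Hell : forall e, (1 <= ell e)%N)
  (s t : V) (Hst : s != t) (L : nat) (HL : (0 < L)%N)
  (HPL : exists P, in_PL tl hd ell s t L P)
  (beta : R) (Hbeta : is_LP_opt tl hd ell s t L c beta)
  (eps w delta : R) (Heps : (0 < eps)%R) (Hw : (0 < w)%R) (Hdelta : (0 < delta)%R)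
  (O : (E -> R) -> seq E) (HO : approx_oracle tl hd ell s t L w O)
  (i : nat) (Hi1 : (1 <= i)%N)
  (Hrun : forall j, (j < i)%N -> (alphabar O c eps delta j < 1 + w)%R) :
  forall a : R, is_dL tl hd ell s t L (yseq O c eps delta i) a ->
    (a <= delta * INR L * exp (eps * (1 + w) * fval O c eps delta i / beta))%R.
Proof.
by apply: dist_bound => //; apply: Rlt_le.
Qed.
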